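(* Let $(G_1,\precsim_1)$ and $(G_2,\precsim_2)$ be compatible quasi-ordered abelian groups which are elementarily equivalent in the language $\{0,+,-,\precsim\}$. Then the ordered part of $G_1$ is elementarily equivalent to the ordered part of $G_2$, and the valued part of $G_1$ is elementarily equivalent to the valued part of $G_2$ (both in the language $\{0,+,-,\precsim\}$).
   Context: A compatible quasi-ordered abelian group is an abelian group $G$ with a total quasi-order $\precsim$ (reflexive, transitive, any two elements comparable) such that, writing $a\sim b$ for $a\precsim b\wedge b\precsim a$: $(Q_1)$ $x\sim0\Rightarrow x=0$; $(Q_2)$ $x\precsim y\wedge y\not\sim z\Rightarrow x+z\precsim y+z$. With $cl(g)$ the $\sim$-class of $g$, $g$ is o-type if $cl(g)=\{g\}$ and $g$ is not of order $2$; $G^o$, the set of o-type elements, is a subgroup. The ordered part of $G$ is $(G^o,\precsim|_{G^o})$; the valued part is $G/G^o$ with the quasi-order $g+G^o\precsim h+G^o\Leftrightarrow g-h\in G^o\vee(g-h\notin G^o\wedge g\precsim h)$. In the language, $-$ is the unary negation and $\precsim$ is interpreted as the quasi-order. *)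

From HB Require Import structures.
From mathcomp Require Import all_boot all_algebra.
Unset Printing Implicit Defensive.
Import GRing.Theory.
Local Open Scope ring_scope.

Inductive term : Type :=
  | tVar : nat -> term
  | tZero : term
  | tAdd : term -> term -> term
  | tNeg : term -> term.

Inductive formula : Type :=
  | fEq  : term -> term -> formula
  | fLe  : term -> term -> formula
  | fFalse : formula
  | fNot : formula -> formula
  | fAnd : formula -> formula -> formula
  | fOr  : formula -> formula -> formula
  | fImp : formula -> formula -> formula
  | fAll : nat -> formula -> formula
  | fEx  : nat -> formula -> formula.

Fixpoint term_has_var (i : nat) (t : term) : bool :=
  match t with
  | tVar j => j == i
  | tZero => false
  | tAdd t1 t2 => term_has_var i t1 || term_has_var i t2
  | tNeg t1 => term_has_var i t1
  end.

Fixpoint free_in (i : nat) (phi : formula) : bool :=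
  match phi with
  | fEq t1 t2 | fLe t1 t2 => term_has_var i t1 || term_has_var i t2
  | fFalse => false
  | fNot p => free_in i p
  | fAnd p q | fOr p q | fImp p q => free_in i p || free_in i q
  | fAll j p | fEx j p => (i != j) && free_in i p
  end.

Definition sentence (phi : formula) : Prop := forall i, ~~ free_in i phi.

(* An L-structure, presented on a carrier [carrier] by a domain predicate
   (the universe) and a relation interpreting equality (a congruence).
   An ordinary structure has [dom = True] and [eqv = eq]; a substructure is
   obtained by restricting [dom], a quotient structure by coarsening [eqv]. *)
Record Lstruct := {
  carrier : Type;
  dom : carrier -> Prop;
  eqv : carrier -> carrier -> Prop;
  s_zero : carrier;
  s_add : carrier -> carrier -> carrier;
  s_neg : carrier -> carrier;
  s_le : carrier -> carrier -> Prop
}.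

Fixpoint eval_term (M : Lstruct) (e : nat -> carrier M) (t : term) : carrier M :=
  match t with
  | tVar j => e j
  | tZero => s_zero M
  | tAdd t1 t2 => s_add M (eval_term M e t1) (eval_term M e t2)
  | tNeg t1 => s_neg M (eval_term M e t1)
  end.

Definition upd (T : Type) (e : nat -> T) (i : nat) (x : T) : nat -> T :=
  fun j => if j == i then x else e j.

Fixpoint sat (M : Lstruct) (e : nat -> carrier M) (phi : formula) : Prop :=
  match phi with
  | fEq t1 t2 => eqv M (eval_term M e t1) (eval_term M e t2)
  | fLe t1 t2 => s_le M (eval_term M e t1) (eval_term M e t2)
  | fFalse => False
  | fNot p => ~ sat M e p
  | fAnd p q => sat M e p /\ sat M e q
  | fOr p q => sat M e p \/ sat M e q
  | fImp p q => sat M e p -> sat M e q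
  | fAll j p => forall x, dom M x -> sat M (upd _ e j x) p
  | fEx j p => exists x, dom M x /\ sat M (upd _ e j x) p
  end.

Definition holds (M : Lstruct) (phi : formula) : Prop :=
  forall e : nat -> carrier M, (forall i, dom M (e i)) -> sat M e phi.

Definition elem_equiv (M N : Lstruct) : Prop :=
  forall phi, sentence phi -> (holds M phi <-> holds N phi).

Section CQOAG.
Variables (G : zmodType) (le : G -> G -> Prop).

Definition qsim (a b : G) : Prop := le a b /\ le b a.

Definition cqoag : Prop :=
  [/\ (forall x, le x x),
      (forall x y z, le x y -> le y z -> le x z),
      (forall x y, le x y \/ le y x),
      (forall x, qsim x 0 -> x = 0) &
      (forall x y z, le x y -> ~ qsim y z -> le (x + z) (y + z))].

Definition order2 (g : G) : Prop := g != 0 /\ g + g = 0.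

Definition otype (g : G) : Prop :=
  (forall h, qsim g h <-> h = g) /\ ~ order2 g.

Definition full_struct : Lstruct :=
  {| carrier := G; dom := fun _ => True; eqv := eq;
     s_zero := 0; s_add := +%R; s_neg := -%R; s_le := le |}.

Definition ordered_part : Lstruct :=
  {| carrier := G; dom := otype; eqv := eq;
     s_zero := 0; s_add := +%R; s_neg := -%R; s_le := le |}.

(* valued part G/G^o: quotient structure, represented on G with equality
   interpreted as congruence modulo G^o and with the quasi-order
   g+G^o ≾ h+G^o  <->  g-h ∈ G^o  \/ (g-h ∉ G^o /\ g ≾ h). *)
Definition valued_le (g h : G) : Prop :=
  otype (g - h) \/ (~ otype (g - h) /\ le g h).

Definition valued_part : Lstruct :=
  {| carrier := G; dom := fun _ => True; eqv := fun g h => otype (g - h);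
     s_zero := 0; s_add := +%R; s_neg := -%R; s_le := valued_le |}.

End CQOAG.

(* G^o is definable in (G, +, -, 0, ≾) by a formula in one free variable:
   "x ≾ y /\ y ≾ x <-> y = x for all y, and not (x <> 0 /\ x + x = 0)".
   Hence the ordered part is the relativization of G to that formula, and the
   valued part is interpreted in G by reading equality as "x - y is o-type"
   and ≾ through the same formula.  Translating a sentence accordingly
   reduces its truth in either part to the truth of a sentence in G, so
   elementary equivalence of the groups passes to both parts. *)
From mathcomp Require Import all_boot all_algebra.
From Stdlib Require Import Setoid.
Local Open Scope ring_scope.

Fixpoint tbound (t : term) : nat :=
  match t with
  | tVar j => j.+1
  | tZero => 0%N
  | tAdd a b => maxn (tbound a) (tbound b)
  | tNeg a => tbound a
  end.

Fixpoint fbound (p : formula) : nat :=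
  match p with
  | fEq a b | fLe a b => maxn (tbound a) (tbound b)
  | fFalse => 0%N
  | fNot q => fbound q
  | fAnd q r | fOr q r | fImp q r => maxn (fbound q) (fbound r)
  | fAll j q | fEx j q => maxn j.+1 (fbound q)
  end.

Lemma term_has_var_bound i t : term_has_var i t -> (i < tbound t)%N.
Proof.
elim: t => [j|//|a IHa b IHb|a IHa] /=.
- by move/eqP=> ->.
- by case/orP=> [/IHa|/IHb]; rewrite leq_max => ->; rewrite ?orbT.
- exact: IHa.
Qed.

Lemma term_hasNvar_bound h t : (tbound t <= h)%N -> ~~ term_has_var h t.
Proof. by move=> tb_h; apply/negP => /term_has_var_bound; rewrite ltnNge tb_h. Qed.

Lemma sentence_free_sub p q :
  (forall i, free_in i q -> free_in i p) -> sentence p -> sentence q.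
Proof. by move=> sub_pq p_closed i; apply/negP => /sub_pq; apply/negP. Qed.

Lemma eval_term_ext (M : Lstruct) t (e e' : nat -> carrier M) :
  (forall i, term_has_var i t -> e i = e' i) -> eval_term M e t = eval_term M e' t.
Proof.
elim: t => [j|//|a IHa b IHb|a IHa] /= ee'.
- by apply: ee'; rewrite /= eqxx.
- by rewrite IHa ?IHb // => i i_t; apply: ee'; rewrite i_t ?orbT.
- by rewrite IHa.
Qed.

Lemma sat_ext (M : Lstruct) p (e e' : nat -> carrier M) :
  (forall i, free_in i p -> e i = e' i) -> (sat M e p <-> sat M e' p).
Proof.
elim: p e e' => [a b|a b| |q IH|q IHq r IHr|q IHq r IHr|q IHq r IHr|j q IH|j q IH]
  e e' ee' /=.
- 1-2: by rewrite !(eval_term_ext _ _ e e') // => i i_t; apply: ee'; rewrite /= i_t ?orbT.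
- by [].
- by rewrite (IH e e').
- 1-3: by rewrite (IHq e e') ?(IHr e e') // => i i_p; apply: ee'; rewrite /= i_p ?orbT.
- have E x : sat M (upd _ e j x) q <-> sat M (upd _ e' j x) q.
    apply: IH => i i_q; rewrite /upd; case: eqVneq => // ij.
    by apply: ee'; rewrite /= ij.
  by split=> Hq x Dx; apply/E; apply: Hq.
- have E x : sat M (upd _ e j x) q <-> sat M (upd _ e' j x) q.
    apply: IH => i i_q; rewrite /upd; case: eqVneq => // ij.
    by apply: ee'; rewrite /= ij.
  by split=> -[x [Dx Hq]]; exists x; split => //; apply/E.
Qed.

Definition fIff (a b : formula) : formula := fAnd (fImp a b) (fImp b a).

(* The bound variable [h] must not occur in [t]. *)
Definition otype_fml (t : term) (h : nat) : formula := locked (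
  fAnd (fAll h (fIff (fAnd (fLe t (tVar h)) (fLe (tVar h) t)) (fEq (tVar h) t)))
       (fNot (fAnd (fNot (fEq t tZero)) (fEq (tAdd t t) tZero)))).

Lemma free_in_otype_fml i t h : free_in i (otype_fml t h) -> term_has_var i t.
Proof.
by rewrite /otype_fml -lock /=; case: eqVneq => [->|_] /=; rewrite !orbF !orbb.
Qed.

Fixpoint relativize_otype (h : nat) (p : formula) : formula :=
  match p with
  | fEq a b => fEq a b
  | fLe a b => fLe a b
  | fFalse => fFalse
  | fNot q => fNot (relativize_otype h q)
  | fAnd q r => fAnd (relativize_otype h q) (relativize_otype h r)
  | fOr q r => fOr (relativize_otype h q) (relativize_otype h r)
  | fImp q r => fImp (relativize_otype h q) (relativize_otype h r)
  | fAll j q => fAll j (fImp (otype_fml (tVar j) h) (relativize_otype h q))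
  | fEx j q => fEx j (fAnd (otype_fml (tVar j) h) (relativize_otype h q))
  end.

Definition tSub (a b : term) : term := tAdd a (tNeg b).

Fixpoint valued_interp (h : nat) (p : formula) : formula :=
  match p with
  | fEq a b => otype_fml (tSub a b) h
  | fLe a b => fOr (otype_fml (tSub a b) h)
                   (fAnd (fNot (otype_fml (tSub a b) h)) (fLe a b))
  | fFalse => fFalse
  | fNot q => fNot (valued_interp h q)
  | fAnd q r => fAnd (valued_interp h q) (valued_interp h r)
  | fOr q r => fOr (valued_interp h q) (valued_interp h r)
  | fImp q r => fImp (valued_interp h q) (valued_interp h r)
  | fAll j q => fAll j (valued_interp h q)
  | fEx j q => fEx j (valued_interp h q)
  end.

Lemma free_in_relativize_otype h p i :
  free_in i (relativize_otype h p) -> free_in i p.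
Proof.
elim: p => [a b|a b||q IH|q IHq r IHr|q IHq r IHr|q IHq r IHr|j q IH|j q IH] //=.
- 1-3: by case/orP=> [/IHq|/IHr] ->; rewrite ?orbT.
- 1-2: case/andP=> ij /orP[/free_in_otype_fml /=|/IH ->]; last by rewrite ij.
  1-2: by rewrite eq_sym (negbTE ij).
Qed.

Lemma free_in_valued_interp h p i :
  free_in i (valued_interp h p) -> free_in i p.
Proof.
elim: p => [a b|a b||q IH|q IHq r IHr|q IHq r IHr|q IHq r IHr|j q IH|j q IH] //=.
- exact: free_in_otype_fml.
- by case/orP=> [|/orP[|//]] /free_in_otype_fml.
- 1-3: by case/orP=> [/IHq|/IHr] ->; rewrite ?orbT.
- 1-2: by case/andP=> -> /IH.
Qed.

Section Interpretation.
Variables (G : zmodType) (le : G -> G -> Prop).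

Local Notation GL := (full_struct G le).

Lemma sat_otype_fml e t h : ~~ term_has_var h t ->
  (sat GL e (otype_fml t h) <-> otype G le (eval_term GL e t)).
Proof.
move=> h_t; rewrite /otype_fml -lock /= /otype /order2 /qsim.
have eval_upd x : eval_term GL (upd _ e h x) t = eval_term GL e t.
  apply: eval_term_ext => i i_t; rewrite /upd; case: eqVneq => // ih.
  by move: h_t; rewrite -ih i_t.
have upd_h x : upd _ e h x h = x by rewrite /upd eqxx.
split=> -[cl_g not2].
- split=> [y|[/eqP g_nz gg0]]; last by apply: not2.
  by have := cl_g y I; rewrite eval_upd upd_h => -[].
- split=> [y _|[g_nz gg0]]; last by apply: not2; split=> //; apply/eqP.
  by rewrite eval_upd upd_h; have [] := cl_g y.
Qed.

Lemma otype_fml_upd e j h x : (j < h)%N ->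
  sat GL (upd _ e j x) (otype_fml (tVar j) h) <-> otype G le x.
Proof. by move=> j_h; rewrite sat_otype_fml ?term_hasNvar_bound //= /upd eqxx. Qed.

Lemma eval_term_ordered_part e t :
  eval_term (ordered_part G le) e t = eval_term GL e t.
Proof. by elim: t => //= [a -> b ->|a ->]. Qed.

Lemma eval_term_valued_part e t :
  eval_term (valued_part G le) e t = eval_term GL e t.
Proof. by elim: t => //= [a -> b ->|a ->]. Qed.

Lemma sat_relativize_otype h p : (fbound p <= h)%N ->
  forall e, sat (ordered_part G le) e p <-> sat GL e (relativize_otype h p).
Proof.
elim: p => [a b|a b||q IH|q IHq r IHr|q IHq r IHr|q IHq r IHr|j q IH|j q IH]
  /= p_h e; rewrite ?eval_term_ordered_part //; move: p_h; rewrite ?geq_max.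
- by move=> /IH E; rewrite E.
- 1-3: by case/andP=> /IHq Eq /IHr Er; rewrite Eq Er.
- case/andP=> j_h /IH E.
  split=> Hq x Dx.
    by move/(otype_fml_upd _ _ _ _ j_h) => Ox; apply/E/Hq.
  by apply/E/Hq => //; apply/otype_fml_upd.
- case/andP=> j_h /IH E.
  split=> -[x [Dx Hq]]; exists x.
    by split=> //; split; [apply/otype_fml_upd|apply/E].
  by case: Hq => /(otype_fml_upd _ _ _ _ j_h) Ox /E.
Qed.

Lemma sat_valued_interp h p : (fbound p <= h)%N ->
  forall e, sat (valued_part G le) e p <-> sat GL e (valued_interp h p).
Proof.
elim: p => [a b|a b||q IH|q IHq r IHr|q IHq r IHr|q IHq r IHr|j q IH|j q IH]
  /= p_h e; rewrite ?sat_otype_fml ?term_hasNvar_bound //= ?eval_term_valued_part //;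
  move: p_h; rewrite ?geq_max.
- by move=> /IH E; rewrite E.
- 1-3: by case/andP=> /IHq Eq /IHr Er; rewrite Eq Er.
- by case/andP=> _ /IH E; split=> Hq x Dx; apply/E; apply: Hq.
- by case/andP=> _ /IH E; split=> -[x [_ /E Hq]]; exists x.
Qed.

Lemma otype0 : cqoag G le -> otype G le 0.
Proof.
case=> le_refl _ _ sim0 _; split; last by rewrite /order2 eqxx; case.
by move=> y; rewrite /qsim; split=> [[le0y ley0]|->]; [apply: sim0|split].
Qed.

(* The ordered part needs an assignment into G^o to evaluate a sentence;
   0 is one by Q1. *)
Lemma holds_ordered_part p : cqoag G le -> sentence p ->
  holds (ordered_part G le) p <-> holds GL (relativize_otype (fbound p) p).
Proof.
move=> qG p_closed; split=> Hp e e_dom; last by apply/sat_relativize_otype/Hp.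
have e_0 i : free_in i (relativize_otype (fbound p) p) -> e i = 0.
  by move/free_in_relativize_otype => i_p; move: (p_closed i); rewrite i_p.
apply/(sat_ext _ _ _ _ e_0)/sat_relativize_otype => //.
by apply: Hp => i; apply: otype0.
Qed.

Lemma holds_valued_part p :
  holds (valued_part G le) p <-> holds GL (valued_interp (fbound p) p).
Proof. by split=> Hp e e_dom; apply/sat_valued_interp/Hp. Qed.

End Interpretation.

Lemma elem_equiv_interp (M1 M2 N1 N2 : Lstruct) (tr : formula -> formula) :
  (forall p, sentence p -> sentence (tr p)) ->
  (forall p, sentence p -> holds M1 p <-> holds N1 (tr p)) ->
  (forall p, sentence p -> holds M2 p <-> holds N2 (tr p)) ->
  elem_equiv N1 N2 -> elem_equiv M1 M2.
Proof.
move=> tr_closed tr1 tr2 N12 p p_closed.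
by rewrite tr1 // tr2 //; apply: N12; apply: tr_closed.
Qed.

Theorem mainTheorem16 (G1 G2 : zmodType) (le1 : G1 -> G1 -> Prop) (le2 : G2 -> G2 -> Prop) :
  cqoag G1 le1 -> cqoag G2 le2 ->
  elem_equiv (full_struct G1 le1) (full_struct G2 le2) ->
  elem_equiv (ordered_part G1 le1) (ordered_part G2 le2) /\
  elem_equiv (valued_part G1 le1) (valued_part G2 le2).
Proof.
move=> qG1 qG2 G12; split.
- apply: (@elem_equiv_interp _ _ _ _ (fun p => relativize_otype (fbound p) p) _ _ _ G12).
  + by move=> p; apply/sentence_free_sub/free_in_relativize_otype.
  + by move=> p; apply: holds_ordered_part.
  + by move=> p; apply: holds_ordered_part.
- apply: (@elem_equiv_interp _ _ _ _ (fun p => valued_interp (fbound p) p) _ _ _ G12).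
  + by move=> p; apply/sentence_free_sub/free_in_valued_interp.
  + by move=> p _; apply: holds_valued_part.
  + by move=> p _; apply: holds_valued_part.
Qed.
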